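(* Let $\lambda$ be a generic normalized additively alternating $n\times n$ complex matrix with biresidue matrix $b$, and let $I\subseteq\{0,\dots,n-2\}$ be such that $\{i,i+1\}$ is a smoothable edge of $b$ for every $i\in I$. Then the smoothable weights $\boldsymbol\theta_i$, $i\in I$, are linearly independent over $\mathbb{C}$.
   Context: Additively alternating: $\lambda_{ji}=-\lambda_{ij}$; normalized: rows sum to $0$. $\lambda$ is generic if it has rank $n-1$ and every relevant $\operatorname{EExp}(\lambda)$-Hochschild-contributing weight is $\lambda$-Poisson-contributing, where $\operatorname{EExp}(\lambda)=(e^{\lambda_{ij}})$; a weight $\mathbf w\in\mathbb{Z}^n$ is relevant if $w_i\ge-1$, $\sum w_i=0$; $q$-Hochschild-contributing if $w_i\ge-1$ for all $i$ and $\prod_jq_{ij}^{w_j}=1$ whenever $w_i\ge0$; $\lambda$-Poisson-contributing if $w_i\ge-1$ for all $i$ and $\sum_j\lambda_{ij}w_j=0$ whenever $w_i\ge0$. The biresidue matrix is the unique normalized alternating $b$ with $b|_\Delta=(\lambda|_\Delta)^{-1}$, $\Delta=\{z\in\mathbb{C}^n:\sum z_i=0\}$. The edge $\{i,j\}$ is smoothable if $b_{ij}\ne0$ and $(b_{jk}+b_{ki})/b_{ij}\in\mathbb{Z}_{\ge0}$ for $k\ne i,j$; its smoothable weight $\boldsymbol\theta$ has $\theta_i=\theta_j=-1$ and $\theta_k=(b_{jk}+b_{ki})/b_{ij}$ for $k\neq i,j$; $\boldsymbol\theta_i$ denotes the smoothable weight of $\{i,i+1\}$. *)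

(* complex numbers are R[i] (mathcomp-real-closed) over an
   abstract R : realType (mathcomp-analysis), so that the complex exponential
   can be built from expR, cos and sin. *)
From HB Require Import structures.
From mathcomp Require Import all_boot all_order all_algebra.
From mathcomp Require Import reals sequences exp trigo.
From mathcomp Require Import complex.
Set Implicit Arguments. Unset Strict Implicit. Unset Printing Implicit Defensive.
Import Order.TTheory GRing.Theory Num.Theory.
Local Open Scope ring_scope.

Section Defs.
Variable R : realType.
Local Notation C := R[i].

Definition cexp (z : C) : C :=
  let: Complex a b := z in Complex (expR a * cos b) (expR a * sin b).

Variable n : nat.

Definition add_alternating (l : 'M[C]_n) : Prop :=
  forall i j, l j i = - l i j.

Definition normalized (l : 'M[C]_n) : Prop :=
  forall i, \sum_(j < n) l i j = 0.

Definition EExp (l : 'M[C]_n) : 'M[C]_n := \matrix_(i, j) cexp (l i j).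

Definition relevant (w : 'I_n -> int) : Prop :=
  (forall i, -1 <= w i) /\ \sum_(i < n) w i = 0.

Definition hochschild_contributing (q : 'M[C]_n) (w : 'I_n -> int) : Prop :=
  (forall i, -1 <= w i) /\
  (forall i, 0 <= w i -> \prod_(j < n) (q i j) ^ (w j) = 1).

Definition poisson_contributing (l : 'M[C]_n) (w : 'I_n -> int) : Prop :=
  (forall i, -1 <= w i) /\
  (forall i, 0 <= w i -> \sum_(j < n) l i j * (w j)%:~R = 0).

Definition generic (l : 'M[C]_n) : Prop :=
  \rank l = n.-1 /\
  (forall w, relevant w -> hochschild_contributing (EExp l) w ->
             poisson_contributing l w).

Definition inDelta (z : 'cV[C]_n) : Prop := \sum_(i < n) z i 0 = 0.

Definition biresidue (l b : 'M[C]_n) : Prop :=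
  normalized b /\ add_alternating b /\
  (forall z, inDelta z -> b *m (l *m z) = z /\ l *m (b *m z) = z).

Definition smoothable (b : 'M[C]_n) (i j : 'I_n) : Prop :=
  b i j != 0 /\
  (forall k, k != i -> k != j ->
     exists m : nat, (b j k + b k i) / b i j = m%:R).

Definition smoothable_weight (b : 'M[C]_n) (i j : 'I_n) : 'rV[C]_n :=
  \row_k (if (k == i) || (k == j) then -1 else (b j k + b k i) / b i j).

(* i + 1 as an index (meaningful when i.+1 < n) *)
Definition succ_idx (i : 'I_n) : 'I_n := insubd i i.+1.

End Defs.

From HB Require Import structures.
From mathcomp Require Import all_boot all_order all_algebra.
From mathcomp Require Import reals sequences exp trigo.
From mathcomp Require Import complex.

(* With b alternating, the smoothable weight of an edge {i, j} is
   b_ij^-1 (e_j - e_i) b.  A relation sum_i c_i theta_i = 0 therefore says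
   w b = 0 for w = sum_i (c_i / b_{i,i+1}) (e_{i+1} - e_i), a vector of Delta.
   Transposing, b w = 0, and b is injective on Delta because lambda b is the
   identity there; so w = 0.  The differences e_{i+1} - e_i are linearly
   independent (read the coordinates of w from the left), so every c_i
   vanishes. *)

Set Implicit Arguments. Unset Strict Implicit. Unset Printing Implicit Defensive.
Import Order.TTheory GRing.Theory Num.Theory.
Local Open Scope ring_scope.

Lemma free_enumP (K : fieldType) (vT : vectType K) (T : finType) (A : {pred T})
    (v : T -> vT) :
  reflect (forall c, \sum_(i in A) c i *: v i = 0 -> {in A, forall i, c i = 0})
          (free [seq v i | i <- enum A]).
Proof.
have nthX (j : 'I_#|A|) : [seq v i | i <- enum A]`_j = v (enum_val j).
  by rewrite (nth_map (enum_default j)) -?cardE.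
apply: (iffP (freeP (X := map_tuple v (enum_tuple A)))) => [freeX c cv0 i Ai|].
  rewrite -(enum_rankK_in Ai Ai); apply: (freeX (c \o enum_val)).
  by rewrite -[RHS]cv0 (big_enum_val (A := A)); apply: eq_bigr => j _; rewrite nthX.
move=> freeA k kX0 j; pose c i := k (enum_rank_in (enum_valP j) i).
rewrite -[j](enum_valK_in (enum_valP j)) -/(c _) freeA ?enum_valP //.
rewrite -[RHS]kX0 (big_enum_val (A := A)); apply: eq_bigr => j' _.
by rewrite nthX /c enum_valK_in.
Qed.

Lemma succ_idx_val n (i : 'I_n) : (i.+1 < n)%N -> val (succ_idx i) = i.+1.
Proof. by move=> lt_in; rewrite /succ_idx insubdK. Qed.

Lemma free_succ_diff (F : fieldType) n (A : {pred 'I_n}) :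
  {in A, forall i : 'I_n, i.+1 < n}%N ->
  free [seq 'e_(succ_idx i) - 'e_i : 'rV[F]_n | i <- enum A].
Proof.
move=> ltA; apply/free_enumP => c c0.
suff cA m (i : 'I_n) : (i < m)%N -> i \in A -> c i = 0.
  by move=> i; apply: cA (ltnSn i).
elim: m i => // m IH i le_im Ai.
have from_pred : \sum_(j in A) c j * (succ_idx j == i)%:R = 0.
  apply: big1 => j Aj; have [ji|] := eqVneq (succ_idx j) i; last by rewrite mulr0.
  by rewrite IH ?mul0r // -ltnS -(succ_idx_val (ltA j Aj)) ji.
have from_self : \sum_(j in A) c j * (j == i)%:R = c i.
  rewrite (bigD1 i) //= eqxx mulr1 big1 ?addr0 // => j /andP[_ /negbTE->].
  by rewrite mulr0.
have /eqP := congr1 (fun w : 'rV_n => w 0 i) c0.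
rewrite summxE mxE.
rewrite (eq_bigr (fun j => c j * (succ_idx j == i)%:R - c j * (j == i)%:R)).
  by rewrite sumrB from_pred from_self sub0r oppr_eq0 => /eqP.
by move=> j _; rewrite !mxE /= mulrBr !(eq_sym i).
Qed.

Lemma sum_row_comb_delta_diff (F : ringType) n (T : finType) (A : {pred T})
    (a : T -> F) (s t : T -> 'I_n) :
  \sum_k (\sum_(x in A) a x *: ('e_(s x) - 'e_(t x)) : 'rV[F]_n) 0 k = 0.
Proof.
have sum_eq1 (j : 'I_n) : \sum_k ((k == j)%:R : F) = 1.
  by rewrite (bigD1 j) //= eqxx big1 ?addr0 // => k /negbTE->.
under eq_bigr do rewrite summxE.
rewrite exchange_big big1 // => x _.
under eq_bigr do rewrite !mxE eqxx /=.
by rewrite -mulr_sumr sumrB !sum_eq1 subrr mulr0.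
Qed.

Section Biresidue.
Variables (R : realType) (n : nat).
Implicit Types (l b : 'M[R[i]]_n).

Lemma add_alternating_diag b : add_alternating b -> forall k, b k k = 0.
Proof. by move=> alt_b k; apply/eqP; rewrite -eqNr -alt_b. Qed.

Lemma add_alternating_trmx b : add_alternating b -> b^T = - b.
Proof. by move=> alt_b; apply/matrixP => k k'; rewrite !mxE alt_b. Qed.

Lemma smoothable_weightE b (j k : 'I_n) :
  add_alternating b -> j != k -> b j k != 0 ->
  smoothable_weight b j k = ((b j k)^-1 *: ('e_k - 'e_j)) *m b.
Proof.
move=> alt_b jk bjk0; rewrite -scalemxAl mulmxBl -!rowE; apply/rowP => x.
rewrite !mxE; have [->|xj] /= := eqVneq x j.
  by rewrite add_alternating_diag // subr0 [b k j]alt_b mulrN mulVf.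
have [->|xk] /= := eqVneq x k.
  by rewrite add_alternating_diag // sub0r mulrN mulVf.
by rewrite [b x j]alt_b mulrC.
Qed.

Lemma biresidue_mulmx_eq0 l b (w : 'rV_n) :
  biresidue l b -> inDelta w^T -> w *m b = 0 -> w = 0.
Proof.
move=> [_ [alt_b inv_b]] Dw wb0.
have bw0 : b *m w^T = 0.
  apply/eqP; rewrite -oppr_eq0 -mulNmx -add_alternating_trmx //.
  by rewrite -trmx_mul wb0 trmx0.
by rewrite -[w]trmxK -(proj2 (inv_b _ Dw)) bw0 mulmx0 trmx0.
Qed.

End Biresidue.

Theorem lemma5p2 (R : realType) (n : nat) (l b : 'M[R[i]]_n) (I : {set 'I_n}) :
  add_alternating l -> normalized l -> generic l ->
  biresidue l b ->
  (forall i, i \in I -> (i.+1 < n)%N) ->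
  (forall i, i \in I -> smoothable b i (succ_idx i)) ->
  free [seq smoothable_weight b i (succ_idx i) | i <- enum I].
Proof.
move=> _ _ _ bres ltI smI; have [_ [alt_b _]] := bres.
have b_neq0 i : i \in I -> b i (succ_idx i) != 0 by case/smI.
have succ_neq i : i \in I -> i != succ_idx i.
  by move=> iI; rewrite -val_eqE succ_idx_val ?ltI // ltn_eqF.
apply/free_enumP => c c0.
pose a i := c i / b i (succ_idx i).
pose w : 'rV_n := \sum_(i in I) a i *: ('e_(succ_idx i) - 'e_i).
have wb0 : w *m b = 0.
  rewrite -[RHS]c0 mulmx_suml; apply: eq_bigr => i iI.
  by rewrite smoothable_weightE ?succ_neq ?b_neq0 // -!scalemxAl scalerA.
have Dw : inDelta w^T.
  rewrite /inDelta -[RHS](sum_row_comb_delta_diff I a (@succ_idx n) id).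
  by apply: eq_bigr => k _; rewrite mxE.
have a0 : {in I, forall i, a i = 0}.
  move/free_enumP: (free_succ_diff R[i] ltI); apply.
  exact: biresidue_mulmx_eq0 bres Dw wb0.
move=> i iI; have /eqP := a0 i iI.
by rewrite mulf_eq0 invr_eq0 (negbTE (b_neq0 i iI)) orbF => /eqP.
Qed.
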